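(* Let $A\in\Theta(n,r)$, $\nu=\mathrm{co}(A)$, and $1\le i\le n-1$. Write $S=S_0(n,r)$. (1) Suppose $\nu_{i+1}\ge1$. Let $s=\min\{x: a_{xi}>0\}$ (with $s=\infty$ if column $i$ is zero) and $t=\min\{x:a_{x,i+1}>0\}$. Then $e_A=ye_{i,\nu}$ for some $y\in S$ if and only if $s\ge t$. (2) Suppose $\nu_i\ge1$. Let $x_0=\max\{x:a_{xi}>0\}$ and $y_0=\max\{x: a_{x,i+1}>0\}$ (with $y_0=-\infty$ if column $i+1$ is zero). Then $e_A=yf_{i,\nu}$ for some $y\in S$ if and only if $x_0\ge y_0$.
   Context: Setup: Fix positive integers $n,r$ and a field $k$. $\Lambda(n,r)$: compositions of $r$ into $n$ nonnegative parts. $\Theta(n,r)$: $n\times n$ nonnegative integer matrices $A=(a_{ij})$ with entry sum $r$, with row/column-sum vectors $\mathrm{ro}(A),\mathrm{co}(A)$. $E_{ij}$ denotes the elementary matrix. The $0$-Schur algebra $S_0(n,r)$ (specialization at $q=0$ of the $q$-Schur algebra, tensored with $k$) has basis $\{e_A:A\in\Theta(n,r)\}$ (orbits of $GL(V)$ on pairs of $n$-step flags in an $r$-dimensional space) with $e_Ae_B=0$ if $\mathrm{co}(A)\ne\mathrm{ro}(B)$, otherwise $e_Ae_B$ is the unique open orbit among pairs $(f,h)$ with $(f,g)\in e_A,(g,h)\in e_B$ for some $g$. For $\nu\in\Lambda(n,r)$: $e_{i,\nu}$ (defined if $\nu_{i+1}\ge1$) is $e_A$ with $\mathrm{co}(A)=\nu$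 whose only nonzero off-diagonal entry is $1$ at $(i,i+1)$; $f_{i,\nu}$ (defined if $\nu_i\ge1$) is $e_A$ with $\mathrm{co}(A)=\nu$ whose only nonzero off-diagonal entry is $1$ at $(i+1,i)$. Right multiplication rules: if $\mathrm{co}(B)_{i+1}>0$ then $e_Bf_{i}=e_{B+E_{p,i}-E_{p,i+1}}$ with $p=\max\{j:b_{j,i+1}>0\}$; if $\mathrm{co}(B)_i>0$ then $e_Be_i=e_{B-E_{p,i}+E_{p,i+1}}$ with $p=\min\{j:b_{ji}>0\}$ (here $e_i,f_i$ are the generators with row vector $\mathrm{co}(B)$). *)

From HB Require Import structures.
From mathcomp Require Import all_boot all_order all_algebra.
Set Implicit Arguments. Unset Strict Implicit. Unset Printing Implicit Defensive.
Import GRing.Theory.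

(* Theta(n,r): n x n matrices of nonnegative integers with entry sum r.
   Entries are bounded by r, so we store them in 'I_r.+1 (finite type). *)
Definition Theta (n r : nat) :=
  {A : {ffun 'I_n * 'I_n -> 'I_r.+1} | \sum_(x : 'I_n * 'I_n) nat_of_ord (A x) == r}.

(* Entry a_{pq} with 0-based nat indices (0 outside the range). *)
Definition ent n r (A : Theta n r) (p q : nat) : nat :=
  match (insub p : option 'I_n), (insub q : option 'I_n) with
  | Some p', Some q' => nat_of_ord (val A (p', q'))
  | _, _ => 0
  end.

Definition ro n r (A : Theta n r) (p : nat) : nat := \sum_(q < n) ent A p q.
Definition co n r (A : Theta n r) (q : nat) : nat := \sum_(p < n) ent A p q.

Definition offdiag_only n r (G : Theta n r) (p0 q0 : nat) : Prop :=
  forall p q, p < n -> q < n -> p != q ->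
    ent G p q = (if (p == p0) && (q == q0) then 1 else 0).

(* e_{i,nu}, f_{i,nu}: characterized by their column vector nu (0-based i, i+1 < n) *)
Definition is_e_col n r (i : nat) (nu : nat -> nat) (G : Theta n r) : Prop :=
  (forall q, q < n -> co G q = nu q) /\ offdiag_only G i i.+1.
Definition is_f_col n r (i : nat) (nu : nat -> nat) (G : Theta n r) : Prop :=
  (forall q, q < n -> co G q = nu q) /\ offdiag_only G i.+1 i.
(* e_i, f_i characterized by their row vector lam *)
Definition is_e_row n r (i : nat) (lam : nat -> nat) (G : Theta n r) : Prop :=
  (forall p, p < n -> ro G p = lam p) /\ offdiag_only G i i.+1.
Definition is_f_row n r (i : nat) (lam : nat -> nat) (G : Theta n r) : Prop :=
  (forall p, p < n -> ro G p = lam p) /\ offdiag_only G i.+1 i.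

Definition is_min_nz n r (A : Theta n r) (q x : nat) : Prop :=
  [/\ x < n, 0 < ent A x q & forall z, z < x -> ent A z q = 0].
Definition is_max_nz n r (A : Theta n r) (q x : nat) : Prop :=
  [/\ x < n, 0 < ent A x q & forall z, x < z -> z < n -> ent A z q = 0].

(* The defining properties of S_0(n,r) used in the paper:
   {e_A} is a k-basis, e_A e_B = 0 if co(A) <> ro(B), otherwise e_A e_B is a
   basis element, and the right multiplication rules by generators. *)
Definition S0_axioms (k : fieldType) (n r : nat) (S : algType k)
    (e : Theta n r -> S) : Prop :=
      (forall s : S, exists c : Theta n r -> k, s = \sum_(A : Theta n r) c A *: e A)%R /\
      (forall c : Theta n r -> k, (\sum_(A : Theta n r) c A *: e A = 0)%R -> forall A, c A = 0%R) /\
      (forall A B : Theta n r, ~ (forall j, j < n -> co A j = ro B j) -> (e A * e B = 0)%R) /\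
      (forall A B : Theta n r, (forall j, j < n -> co A j = ro B j) ->
        exists C : Theta n r, (e A * e B)%R = e C) /\
      (* rule: e_B f_i = e_{B + E_{p,i} - E_{p,i+1}}, p = max{j : b_{j,i+1} > 0} *)
      (forall (i : nat) (B G C : Theta n r) (p : nat), i.+1 < n ->
        is_f_row i (co B) G -> is_max_nz B i.+1 p ->
        (forall x y, x < n -> y < n ->
           ent C x y = if (x == p) && (y == i) then (ent B x y).+1
                       else if (x == p) && (y == i.+1) then (ent B x y).-1
                       else ent B x y) ->
        (e B * e G)%R = e C) /\
    (* rule: e_B e_i = e_{B - E_{p,i} + E_{p,i+1}}, p = min{j : b_{j,i} > 0} *)
      (forall (i : nat) (B G C : Theta n r) (p : nat), i.+1 < n ->
        is_e_row i (co B) G -> is_min_nz B i p ->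
        (forall x y, x < n -> y < n ->
           ent C x y = if (x == p) && (y == i) then (ent B x y).-1
                       else if (x == p) && (y == i.+1) then (ent B x y).+1
                       else ent B x y) ->
        (e B * e G)%R = e C).

(* If e_A = y g for a generator g, expanding y in the basis shows that
   e_A = e_B g for a single basis element e_B, as every other product e_C g is
   zero or a basis element different from e_A.  By the multiplication rules A
   is then B with one unit of some row p moved: for [e_i] from column i to
   column i+1, where p is the topmost nonzero row of column i of B; for [f_i]
   from column i+1 to column i, where p is the bottommost nonzero row of
   column i+1 of B.  For [e_i] this forces column i of A to vanish above p,
   hence above the topmost nonzero row t of column i+1; conversely, if it
   does, moving one unit of row t back from column i+1 to column i gives a
   suitable B.  The case of [f_i] is the mirror image. *)
From HB Require Import structures.
From mathcomp Require Import all_boot all_order all_algebra.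
From mathcomp Require Import zify.
From Stdlib Require Import Classical.
Import GRing.Theory.
Set Implicit Arguments. Unset Strict Implicit. Unset Printing Implicit Defensive.

Lemma ent_val n r (A : Theta n r) (p q : 'I_n) : ent A p q = val A (p, q).
Proof. by rewrite /ent !valK. Qed.

Lemma ent_out n r (A : Theta n r) p q : n <= p -> ent A p q = 0.
Proof. by move=> Hp; rewrite /ent insubF // ltnNge Hp. Qed.

Lemma sum_ord_indicator n p c : p < n -> \sum_(x < n) ((x : nat) == p) * c = c.
Proof.
move=> Hp; rewrite (bigD1 (Ordinal Hp)) //= eqxx mul1n big1 ?addn0 // => x.
by rewrite -val_eqE /= => /negbTE ->.
Qed.

Lemma Theta_of_fun n r (F : nat -> nat -> nat) :
  \sum_(p < n) \sum_(q < n) F p q = r ->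
  exists C : Theta n r, forall x y, x < n -> y < n -> ent C x y = F x y.
Proof.
rewrite pair_big /= => HF.
have F_le : forall x : 'I_n * 'I_n, F x.1 x.2 <= r.
  by move=> x; rewrite -HF (bigD1 x) //= leq_addr.
pose f := [ffun x : 'I_n * 'I_n => (inord (F x.1 x.2) : 'I_r.+1)].
have Hf : \sum_(x : 'I_n * 'I_n) nat_of_ord (f x) == r.
  by apply/eqP/(etrans _ HF)/eq_bigr => x _; rewrite ffunE inordK // ltnS.
exists (exist _ f Hf) => x y Hx Hy.
rewrite (ent_val _ (Ordinal Hx) (Ordinal Hy)) /= ffunE inordK //.
by rewrite ltnS (F_le (Ordinal Hx, Ordinal Hy)).
Qed.

Lemma sum_ent n r (A : Theta n r) : \sum_(p < n) \sum_(q < n) ent A p q = r.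
Proof.
rewrite pair_big /= -{2}(eqP (valP A)).
by apply: eq_bigr => -[p q] _; rewrite ent_val.
Qed.

(* Only meaningful when [0 < ent B p q1], since [.-1] truncates. *)
Definition move_entry n r (B : Theta n r) (p q1 q2 x y : nat) : nat :=
  if (x == p) && (y == q1) then (ent B x y).-1
  else if (x == p) && (y == q2) then (ent B x y).+1 else ent B x y.

Definition moved n r (B C : Theta n r) (p q1 q2 : nat) : Prop :=
  forall x y, x < n -> y < n -> ent C x y = move_entry B p q1 q2 x y.

Lemma move_entry_to n r (B : Theta n r) p q1 q2 :
  q1 != q2 -> move_entry B p q1 q2 p q2 = (ent B p q2).+1.
Proof. by move=> q12; rewrite /move_entry eqxx eq_sym (negbTE q12) /= eqxx. Qed.

Lemma move_entry_off n r (B : Theta n r) p q1 q2 x y :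
  x != p -> move_entry B p q1 q2 x y = ent B x y.
Proof. by rewrite /move_entry => /negbTE ->. Qed.

Section Move.
Variables (n r : nat) (B : Theta n r) (p q1 q2 : nat).
Hypotheses (q12 : q1 != q2) (Bp_gt0 : 0 < ent B p q1).

Lemma move_entryD x y :
  move_entry B p q1 q2 x y + (x == p) * (y == q1) = ent B x y + (x == p) * (y == q2).
Proof.
rewrite /move_entry; case: (x =P p) => [->|_] /=; last by rewrite !addn0.
case: (y =P q1) => [->|_] /=; first by rewrite (negbTE q12) addn1 addn0 prednK.
by case: (y =P q2) => /= _; rewrite ?addn0 ?addn1.
Qed.

Lemma move_entryE x y : move_entry B p q1 q2 x y =
  if (x == p) && (y == q2) then (ent B x y).+1
  else if (x == p) && (y == q1) then (ent B x y).-1 else ent B x y.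
Proof.
rewrite /move_entry; case: (x =P p) => //= _.
by case: (y =P q1) => [->|//]; rewrite (negbTE q12).
Qed.

Hypotheses (p_lt : p < n) (q1_lt : q1 < n) (q2_lt : q2 < n).

Lemma Theta_move : exists C : Theta n r, moved B C p q1 q2.
Proof.
apply: Theta_of_fun; apply/(etrans _ (sum_ent B))/eq_bigr => x _.
apply/eqP; rewrite -(eqn_add2r ((x : nat) == p)).
have sum_row q : q < n ->
    \sum_(y < n) ((x : nat) == p) * ((y : nat) == q) = ((x : nat) == p).
  move=> Hq; rewrite -[RHS](sum_ord_indicator _ Hq).
  by apply: eq_bigr => y _; rewrite mulnC.
rewrite -[X in _ + X == _](sum_row _ q1_lt) -[X in _ == _ + X](sum_row _ q2_lt).
rewrite -!big_split /=; apply/eqP/eq_bigr => y _.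
exact: move_entryD.
Qed.

Variable C : Theta n r.
Hypothesis BC : moved B C p q1 q2.

Lemma co_move q : q < n -> co C q + (q == q1) = co B q + (q == q2).
Proof.
move=> Hq; rewrite /co -(sum_ord_indicator (q == q1) p_lt).
rewrite -(sum_ord_indicator (q == q2) p_lt) -!big_split /=.
by apply: eq_bigr => x _; rewrite BC //; apply: move_entryD.
Qed.

Lemma moved_inv : moved C B p q2 q1.
Proof.
move=> x y Hx Hy; rewrite /move_entry !BC // /move_entry.
case: (x =P p) => [->|_] //=; case: (y =P q1) => [->|_] /=.
  by rewrite ifN ?prednK.
by case: (_ == q2).
Qed.

End Move.

Lemma ro_offdiag n r (G : Theta n r) a b : a < n -> b < n -> a != b ->
  offdiag_only G a b -> forall p, p < n -> ro G p + (p == b) = co G p + (p == a).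
Proof.
move=> Ha Hb ab HG.
have entG x y : x < n -> y < n ->
    ent G x y = (y == x) * ent G x x + (y == b) * (x == a).
  move=> Hx Hy; case: (y =P x) => [->|yx].
    rewrite mul1n; case: (x =P b) => [->|_]; last by rewrite mul0n addn0.
    by rewrite eq_sym (negbTE ab) addn0.
  rewrite HG //; last by apply/eqP => E; apply: yx.
  by rewrite mul0n add0n mulnC; case: (x == a); case: (y == b).
move=> p Hp; rewrite /ro /co.
under eq_bigr => y _ do rewrite entG //.
under [X in _ = X + _]eq_bigr => x _ do rewrite entG //.
have diag : \sum_(x < n) (p == (x : nat)) * ent G x x = ent G p p.
  rewrite -[RHS](sum_ord_indicator _ Hp); apply: eq_bigr => x _.
  by rewrite eq_sym; case: ((x : nat) =P p) => [->|].
rewrite !big_split /= diag.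
under [X in _ = _ + X + _]eq_bigr => x _ do rewrite mulnC.
by rewrite !sum_ord_indicator // addnAC.
Qed.

Lemma col_nz n r (A : Theta n r) q : 0 < co A q -> exists2 x, x < n & 0 < ent A x q.
Proof.
rewrite lt0n sum_nat_eq0 => /forallPn [x]; rewrite -lt0n => Ax.
by exists x.
Qed.

Section NonzeroRows.
Variables (n r : nat) (A : Theta n r) (q : nat).

Lemma ex_min_nz : (exists2 x, x < n & 0 < ent A x q) -> exists s, is_min_nz A q s.
Proof.
move=> [x Hx Ax]; have Ex : exists x, (x < n) && (0 < ent A x q).
  by exists x; rewrite Hx Ax.
case: (ex_minnP Ex) => m /andP [Hm Am] m_min; exists m; split => // z zm.
apply/eqP; rewrite -leqn0 leqNgt; apply/negP => Az.
by move: (m_min z); rewrite (ltn_trans zm Hm) Az leqNgt zm => /(_ isT).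
Qed.

Lemma ex_max_nz : (exists2 x, x < n & 0 < ent A x q) -> exists s, is_max_nz A q s.
Proof.
move=> [x Hx Ax]; have Ex : exists x, (x < n) && (0 < ent A x q).
  by exists x; rewrite Hx Ax.
have Ex_le y : (y < n) && (0 < ent A y q) -> y <= n by case/andP => /ltnW.
case: (ex_maxnP Ex Ex_le) => m /andP [Hm Am] m_max; exists m; split => // z mz zn.
apply/eqP; rewrite -leqn0 leqNgt; apply/negP => Az.
by move: (m_max z); rewrite zn Az leqNgt mz => /(_ isT).
Qed.

Lemma min_nz_le s z : is_min_nz A q s -> 0 < ent A z q -> s <= z.
Proof.
case=> _ _ s_min Az; rewrite leqNgt; apply/negP => /s_min.
by move: Az => /[swap] ->.
Qed.

Lemma max_nz_ge s z : is_max_nz A q s -> 0 < ent A z q -> z <= s.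
Proof.
case=> _ _ s_max Az; rewrite leqNgt; apply/negP => sz.
have zn : z < n by rewrite ltnNge; apply/negP => /(ent_out A q); move: Az => /[swap] ->.
by move: Az; rewrite s_max.
Qed.

End NonzeroRows.

Section Conditions.
Variables (n r : nat) (A : Theta n r) (q1 q2 : nat).

Lemma min_nz_leP t : is_min_nz A q2 t ->
  (forall s t', is_min_nz A q1 s -> is_min_nz A q2 t' -> t' <= s) <->
  (forall z, z < t -> ent A z q1 = 0).
Proof.
move=> Ht; have [tn At _] := Ht; split=> [le_ts z zt | A0 s t' Hs Ht'].
  apply/eqP; rewrite -leqn0 leqNgt; apply/negP => Az.
  have [s Hs] := ex_min_nz (ex_intro2 _ _ z (ltn_trans zt tn) Az).
  by have := le_ts s t Hs Ht; have := min_nz_le Hs Az; lia.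
have [_ As _] := Hs.
have ts : t <= s by rewrite leqNgt; apply/negP => /A0; move: As => /[swap] ->.
exact: leq_trans (min_nz_le Ht' At) ts.
Qed.

Lemma max_nz_geP x : is_max_nz A q1 x ->
  (forall x' y, is_max_nz A q1 x' -> is_max_nz A q2 y -> y <= x') <->
  (forall z, x < z -> z < n -> ent A z q2 = 0).
Proof.
move=> Hx; have [xn Ax _] := Hx; split=> [le_yx z xz zn | A0 x' y Hx' Hy].
  apply/eqP; rewrite -leqn0 leqNgt; apply/negP => Az.
  have [y Hy] := ex_max_nz (ex_intro2 _ _ z zn Az).
  by have := le_yx x y Hx Hy; have := max_nz_ge Hy Az; lia.
have [yn Ay _] := Hy.
have yx : y <= x by rewrite leqNgt; apply/negP => /A0 /(_ yn); move: Ay => /[swap] ->.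
exact: leq_trans yx (max_nz_ge Hx' Ax).
Qed.

End Conditions.

Section MovedNonzeroRows.
Variables (n r : nat) (B C : Theta n r) (p q1 q2 : nat).
Hypotheses (q12 : q1 != q2) (q1_lt : q1 < n) (q2_lt : q2 < n) (BC : moved B C p q1 q2).

Lemma moved_min_nz t : is_min_nz B q1 p -> is_min_nz C q2 t ->
  forall z, z < t -> ent C z q1 = 0.
Proof.
move=> [pn _ B0] Ht z zt.
have tp : t <= p by apply: min_nz_le Ht _; rewrite BC // move_entry_to.
have zp : z < p by apply: leq_trans tp.
by rewrite BC ?(ltn_trans zp) // move_entry_off ?ltn_eqF // B0.
Qed.

Lemma moved_max_nz x : is_max_nz B q1 p -> is_max_nz C q2 x ->
  forall z, x < z -> z < n -> ent C z q1 = 0.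
Proof.
move=> [pn _ B0] Hx z xz zn.
have px : p <= x by apply: max_nz_ge Hx _; rewrite BC // move_entry_to.
have pz : p < z by apply: leq_ltn_trans xz.
by rewrite BC // move_entry_off ?gtn_eqF // B0.
Qed.

Lemma min_nz_moved : is_min_nz B q1 p -> (forall z, z < p -> ent B z q2 = 0) ->
  is_min_nz C q2 p.
Proof.
move=> [pn _ _] B0; split=> //; first by rewrite BC // move_entry_to.
move=> z zp; by rewrite BC ?(ltn_trans zp) // move_entry_off ?ltn_eqF // B0.
Qed.

Lemma max_nz_moved : is_max_nz B q1 p -> (forall z, p < z -> z < n -> ent B z q2 = 0) ->
  is_max_nz C q2 p.
Proof.
move=> [pn _ _] B0; split=> //; first by rewrite BC // move_entry_to.
move=> z pz zn; by rewrite BC // move_entry_off ?gtn_eqF // B0.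
Qed.

End MovedNonzeroRows.

Section BasisFactor.
Variables (k : fieldType) (n r : nat) (S : algType k) (e : Theta n r -> S).

Hypotheses
  (e_span : forall s : S, exists c : Theta n r -> k, s = (\sum_A c A *: e A)%R)
  (e_free : forall c : Theta n r -> k, (\sum_A c A *: e A = 0)%R -> forall A, c A = 0%R)
  (e_mul0 : forall A B : Theta n r,
     ~ (forall j, j < n -> co A j = ro B j) -> (e A * e B = 0)%R)
  (e_mul_basis : forall A B : Theta n r, (forall j, j < n -> co A j = ro B j) ->
     exists C, (e A * e B)%R = e C).

Local Open Scope ring_scope.

Definition in_other_span (A : Theta n r) (v : S) :=
  exists2 d : Theta n r -> k, d A = 0 & v = \sum_C d C *: e C.

Lemma sum_basis_delta (A : Theta n r) : \sum_C (C == A)%:R *: e C = e A.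
Proof.
rewrite (bigD1 A) //= eqxx scale1r big1 ?addr0 // => C /negbTE ->.
by rewrite scale0r.
Qed.

Lemma other_span0 A : in_other_span A 0.
Proof. by exists (fun=> 0) => //; rewrite big1 // => C _; rewrite scale0r. Qed.

Lemma other_spanD A u v :
  in_other_span A u -> in_other_span A v -> in_other_span A (u + v).
Proof.
move=> [d1 d1A ->] [d2 d2A ->]; exists (fun C => d1 C + d2 C).
  by rewrite d1A d2A addr0.
by rewrite -big_split; apply: eq_bigr => C _; rewrite scalerDl.
Qed.

Lemma other_spanZ A a v : in_other_span A v -> in_other_span A (a *: v).
Proof.
move=> [d dA ->]; exists (fun C => a * d C); first by rewrite dA mulr0.
by rewrite scaler_sumr; apply: eq_bigr => C _; rewrite scalerA.
Qed.

Lemma other_span_basis A C : C != A -> in_other_span A (e C).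
Proof.
move=> CA; exists (fun D => (D == C)%:R); last by rewrite sum_basis_delta.
by rewrite eq_sym (negbTE CA).
Qed.

Lemma basis_notin_other_span A : ~ in_other_span A (e A).
Proof.
move=> [d dA eA].
have := e_free (c := fun C => (C == A)%:R - d C).
rewrite (_ : \sum_C _ = 0) => [/(_ erefl A)|].
  by rewrite eqxx dA subr0 => /eqP; rewrite oner_eq0.
under eq_bigr => C _ do rewrite scalerBl.
by rewrite sumrB sum_basis_delta -eA subrr.
Qed.

Lemma e_inj : injective e.
Proof.
move=> A B eAB; apply/eqP/negPn/negP => AB.
by apply: (basis_notin_other_span (A := B)); rewrite -eAB; apply: other_span_basis.
Qed.

Lemma basis_left_factor A G (y : S) : e A = y * e G ->
  exists2 B, (forall j, (j < n)%N -> co B j = ro G j) & e B * e G = e A.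
Proof.
move=> eA; apply: NNPP => no_factor; apply: (basis_notin_other_span (A := A)).
rewrite eA; have [c ->] := e_span y; rewrite mulr_suml.
apply: big_ind => [|u v|B _]; [exact: other_span0 | exact: other_spanD |].
rewrite -scalerAl; apply: other_spanZ.
have [BG|BG] := classic (forall j, (j < n)%N -> co B j = ro G j); last first.
  by rewrite e_mul0 //; exact: other_span0.
have [C eBG] := e_mul_basis BG; rewrite eBG; apply: other_span_basis.
by apply/eqP => CA; apply: no_factor; exists B; rewrite ?eBG ?CA.
Qed.

End BasisFactor.

Section Generators.
Variables (k : fieldType) (n r : nat) (S : algType k) (e : Theta n r -> S).
Hypothesis e_S0 : S0_axioms e.
Variables (A G : Theta n r) (i : nat).
Hypothesis lt_i1n : i.+1 < n.

Let lt_in : i < n := ltnW lt_i1n.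
Let ii1 : i != i.+1 := negbT (ltn_eqF (ltnSn i)).
Let i1i : i.+1 != i := negbT (gtn_eqF (ltnSn i)).

Lemma left_ideal_e_genP t : is_e_col i (co A) G -> is_min_nz A i.+1 t ->
  (exists y, e A = (y * e G)%R) <-> (forall z, z < t -> ent A z i = 0).
Proof.
have [span [free [mul0 [mul_basis [_ e_rule]]]]] := e_S0.
move=> [Gco Goff] Ht.
have roG q : q < n -> ro G q + (q == i.+1) = co A q + (q == i).
  by move=> qn; rewrite -Gco //; apply: ro_offdiag.
split=> [[y /(basis_left_factor span free mul0 mul_basis) [B BG eBG]] | A0].
  have [p Hp] : exists p, is_min_nz B i p.
    apply/ex_min_nz/col_nz; move: (roG i lt_in).
    by rewrite -BG // eqxx (negbTE ii1); lia.
  have [C BC] := Theta_move ii1 (let: And3 _ Bp _ := Hp in Bp) lt_in lt_i1n.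
  have /(e_inj free) CA : e C = e A.
    by rewrite -eBG; symmetry; apply: e_rule lt_i1n _ Hp BC; split=> // q /BG.
  by rewrite -CA in Ht *; exact: (moved_min_nz ii1 lt_in lt_i1n BC Hp Ht).
have [tn At _] := Ht.
have [B AB] := Theta_move i1i At lt_i1n lt_in.
exists (e B); symmetry; apply: e_rule lt_i1n _ (min_nz_moved i1i lt_in AB Ht A0) _.
  split=> // q qn; have := roG q qn; have := co_move i1i At tn AB qn; lia.
by move=> x' y' x'n y'n; rewrite (moved_inv i1i At AB).
Qed.

Lemma left_ideal_f_genP x : is_f_col i (co A) G -> is_max_nz A i x ->
  (exists y, e A = (y * e G)%R) <-> (forall z, x < z -> z < n -> ent A z i.+1 = 0).
Proof.
have [span [free [mul0 [mul_basis [f_rule _]]]]] := e_S0.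
move=> [Gco Goff] Hx.
have roG q : q < n -> ro G q + (q == i) = co A q + (q == i.+1).
  by move=> qn; rewrite -Gco //; apply: ro_offdiag.
split=> [[y /(basis_left_factor span free mul0 mul_basis) [B BG eBG]] | A0].
  have [p Hp] : exists p, is_max_nz B i.+1 p.
    apply/ex_max_nz/col_nz; move: (roG i.+1 lt_i1n).
    by rewrite -BG // eqxx (negbTE i1i); lia.
  have [C BC] := Theta_move i1i (let: And3 _ Bp _ := Hp in Bp) lt_i1n lt_in.
  have /(e_inj free) CA : e C = e A.
    rewrite -eBG; symmetry; apply: f_rule lt_i1n _ Hp _; first by split=> // q /BG.
    by move=> x' y' x'n y'n; rewrite BC // move_entryE.
  by rewrite -CA in Hx *; exact: (moved_max_nz i1i lt_i1n lt_in BC Hp Hx).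
have [xn Ax _] := Hx.
have [B AB] := Theta_move ii1 Ax lt_in lt_i1n.
exists (e B); symmetry; apply: f_rule lt_i1n _ (max_nz_moved ii1 lt_i1n AB Hx A0) _.
  split=> // q qn; have := roG q qn; have := co_move ii1 Ax xn AB qn; lia.
by move=> x' y' x'n y'n; rewrite (moved_inv ii1 Ax AB) // move_entryE.
Qed.

End Generators.

Theorem mainTheorem13 (k : fieldType) (n r : nat) (SA : algType k)
    (e : Theta n r -> SA) :
  0 < n -> 0 < r -> S0_axioms e ->
  forall (A : Theta n r) (i : nat), i.+1 < n ->
  (1 <= co A i.+1 ->
     forall G : Theta n r, is_e_col i (co A) G ->
       (exists y : SA, e A = (y * e G)%R) <->
       (forall s t, is_min_nz A i s -> is_min_nz A i.+1 t -> t <= s))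
  /\
  (1 <= co A i ->
     forall G : Theta n r, is_f_col i (co A) G ->
       (exists y : SA, e A = (y * e G)%R) <->
       (forall x0 y0, is_max_nz A i x0 -> is_max_nz A i.+1 y0 -> y0 <= x0)).
Proof.
move=> _ _ e_S0 A i lt_i1n.
split=> [/col_nz/ex_min_nz [t Ht] G HG | /col_nz/ex_max_nz [x Hx] G HG].
  by rewrite (min_nz_leP _ Ht); apply: left_ideal_e_genP.
by rewrite (max_nz_geP _ Hx); apply: left_ideal_f_genP.
Qed.
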